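(* Let $\sigma$ be a proper schedule and $\sigma'$ the intermediate schedule obtained from $\sigma$ by an admissible swap at step $j^*\in J$ between machines $M_h$ and $M_i$. Then $C_j(\sigma')\le C_{j^*}(\sigma)$ for all $j\in J_H\cup J_I$.
   Context: Jobs $J=\{1,\dots,n\}$, job $j$ with positive integer processing time $p_j$, are scheduled non-preemptively on $m$ identical machines $M_1,\dots,M_m$; $p_{\max}=\max_j p_j$, $P(X)=\sum_{j\in X}p_j$. A proper schedule $\sigma$ is a partition $J=J_1(\sigma)\cup\dots\cup J_m(\sigma)$, the jobs of $J_i(\sigma)$ processed on $M_i$ consecutively from time $0$ without idle time in increasing index order; $C_j(\sigma)$ is the completion time of $j$. $J_j=\{1,\dots,j\}$, $J_{i,j}(\sigma)=J_i(\sigma)\cap J_j$, $\Delta_{h,i,j}(\sigma)=P(J_{h,j}(\sigma))-P(J_{i,j}(\sigma))$. The swap: admissible for proper $\sigma$ at step $j^*$ with machines $M_h,M_i$ if $j^*\in J_h(\sigma)$, $|J_i(\sigma)\setminus J_{i,j^*}(\sigma)|\ge 2p_{\max}$, and $\Delta_{h,i,j^*}(\sigma)\ge 4p_{\max}^2$. Let $J_I$ be the first (smallest-index) $2p_{\max}$ jobs of $J_i(\sigma)\setminus J_{i,j^*}(\sigma)$ and $J_H$ the last (largest-index) $2p_{\max}$ jobs of $J_{h,j^*}(\sigma)$; choose non-empty $J_{H'}\subseteq J_H$, $J_{I'}\subseteq J_I$ with $P(J_{H'})=P(J_{I'})$. The intermediate schedule $\sigma'$: on $M_h$ the time interval occupied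 by $J_H$ in $\sigma$ is filled by $J_H\setminus J_{H'}$ then $J_{I'}$; on $M_i$ the interval occupied by $J_I$ is filled by $J_{H'}$ then $J_I\setminus J_{I'}$ (each group in its order in $\sigma$); all other jobs keep their positions. *)

(* Jobs are 'I_n (job index k+1 of the paper is ordinal k),
   machines are 'I_m. *)
From mathcomp Require Import all_boot all_order all_algebra.
Set Implicit Arguments. Unset Strict Implicit. Unset Printing Implicit Defensive.

Section Sched.
Variables (n m : nat) (p : 'I_n -> nat).

Definition pmax : nat := \max_(j : 'I_n) p j.

Definition Pset (X : {set 'I_n}) : nat := \sum_(j in X) p j.

(* A proper schedule is given by the machine assignment sigma : 'I_n -> 'I_m;
   J_i(sigma) is its fibre, processed in increasing index order from time 0. *)
Definition Jm (sigma : 'I_n -> 'I_m) (i : 'I_m) : {set 'I_n} :=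
  [set j | sigma j == i].

Definition Jmj (sigma : 'I_n -> 'I_m) (i : 'I_m) (j : 'I_n) : {set 'I_n} :=
  [set k | (sigma k == i) && (k <= j)].

Definition Delta (sigma : 'I_n -> 'I_m) (h i : 'I_m) (j : 'I_n) : int :=
  ((Pset (Jmj sigma h j))%:Z - (Pset (Jmj sigma i j))%:Z)%R.

Definition completion (sigma : 'I_n -> 'I_m) (j : 'I_n) : nat :=
  Pset (Jmj sigma (sigma j) j).

(* the processing sequence of machine i in the proper schedule sigma
   (increasing index order; enum 'I_n is increasing) *)
Definition machine_seq (sigma : 'I_n -> 'I_m) (i : 'I_m) : seq 'I_n :=
  [seq j : 'I_n <- enum 'I_n | sigma j == i].

Definition admissible (sigma : 'I_n -> 'I_m) (jstar : 'I_n) (h i : 'I_m) : Prop :=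
  [/\ jstar \in Jm sigma h,
      2 * pmax <= #|Jm sigma i :\: Jmj sigma i jstar|
    & ((4 * pmax ^ 2)%:Z <= Delta sigma h i jstar)%R].

Definition JHseq (sigma : 'I_n -> 'I_m) (jstar : 'I_n) (h : 'I_m) : seq 'I_n :=
  let l := [seq j : 'I_n <- machine_seq sigma h | j <= jstar] in
  drop (size l - 2 * pmax) l.

Definition JIseq (sigma : 'I_n -> 'I_m) (jstar : 'I_n) (i : 'I_m) : seq 'I_n :=
  take (2 * pmax) [seq j : 'I_n <- machine_seq sigma i | jstar < j].

Definition JH sigma jstar h : {set 'I_n} := [set j in JHseq sigma jstar h].
Definition JI sigma jstar i : {set 'I_n} := [set j in JIseq sigma jstar i].

(* The intermediate schedule sigma', given as the processing sequence of each
   machine (jobs processed consecutively from time 0 without idle time).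
   On M_h the contiguous block J_H is replaced by (J_H \ J_H') then J_I';
   on M_i the contiguous block J_I is replaced by J_H' then (J_I \ J_I');
   everything else is unchanged. *)
Definition intermediate (sigma : 'I_n -> 'I_m) (jstar : 'I_n) (h i : 'I_m)
    (H' I' : {set 'I_n}) : 'I_m -> seq 'I_n :=
  fun k =>
    if k == h then
      let l := [seq j : 'I_n <- machine_seq sigma h | j <= jstar] in
      take (size l - 2 * pmax) l
      ++ [seq j : 'I_n <- JHseq sigma jstar h | j \notin H']
      ++ [seq j : 'I_n <- JIseq sigma jstar i | j \in I']
      ++ [seq j : 'I_n <- machine_seq sigma h | jstar < j]
    else if k == i then
      let a := [seq j : 'I_n <- machine_seq sigma i | jstar < j] in
      [seq j : 'I_n <- machine_seq sigma i | j <= jstar]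
      ++ [seq j : 'I_n <- JHseq sigma jstar h | j \in H']
      ++ [seq j : 'I_n <- JIseq sigma jstar i | j \notin I']
      ++ drop (2 * pmax) a
    else machine_seq sigma k.

Definition ctime_seq (s : seq 'I_n) (j : 'I_n) : nat :=
  \sum_(k <- take (index j s).+1 s) p k.

Definition ctime (S : 'I_m -> seq 'I_n) (j : 'I_n) : nat :=
  if [pick k | j \in S k] is Some k then ctime_seq (S k) j else 0.

End Sched.

(** On M_h the block J_H is refilled by J_H \ J_H' followed by J_I', which has
    the same total length as J_H'; so every job placed there finishes no later
    than the end of the old block, i.e. than C_{j*}. On M_i the refilled block
    starts at P(J_{i,j*}) and has length P(J_I) <= 2 p_max * p_max, and the
    admissibility gap Delta >= 4 p_max^2 makes it end before C_{j*} as well. *)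

From mathcomp Require Import all_boot all_order all_algebra.
From mathcomp Require Import zify.

Set Implicit Arguments.
Unset Strict Implicit.
Unset Printing Implicit Defensive.

Lemma notin_drop_of_take (T : eqType) (s : seq T) k x :
  uniq s -> x \in take k s -> x \notin drop k s.
Proof.
move=> us xt; apply/negP => xd.
move: us; rewrite -(cat_take_drop k s) cat_uniq => /and3P[_ /hasP + _].
by apply; exists x.
Qed.

Section Schedules.
Variables (n m : nat) (p : 'I_n -> nat).

Lemma ctime_seq_cat_le (a x c : seq 'I_n) j : j \notin a -> j \in x ->
  ctime_seq p (a ++ x ++ c) j <= \sum_(k <- a ++ x) p k.
Proof.
move=> ja jx; have jlt : index j x < size x by rewrite index_mem.
rewrite /ctime_seq index_cat (negbTE ja) index_cat jx -addnS takeD.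
rewrite take_size_cat // drop_size_cat // takel_cat // !big_cat leq_add2l.
by rewrite -[in X in _ <= X](cat_take_drop (index j x).+1 x) big_cat leq_addr.
Qed.

Lemma sum_le_size_pmax (s : seq 'I_n) : \sum_(k <- s) p k <= size s * pmax p.
Proof.
elim: s => [|a s IH]; first by rewrite big_nil.
by rewrite big_cons mulSn leq_add // leq_bigmax.
Qed.

Lemma sum_filter_mem (s : seq 'I_n) (A : {set 'I_n}) : uniq s ->
  {subset A <= s} -> \sum_(k <- [seq k <- s | k \in A]) p k = Pset p A.
Proof.
move=> us sA; rewrite /Pset -big_enum; apply: perm_big; apply: uniq_perm.
- exact: filter_uniq.
- exact: enum_uniq.
by move=> x; rewrite mem_filter mem_enum; case xA: (x \in A) => //=; apply: sA.
Qed.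

Lemma sum_filter_split (s : seq 'I_n) (A : {set 'I_n}) :
  \sum_(k <- s) p k =
  \sum_(k <- [seq k <- s | k \in A]) p k + \sum_(k <- [seq k <- s | k \notin A]) p k.
Proof. by rewrite !big_filter [LHS](bigID (mem A)). Qed.

Lemma machine_seq_uniq (sigma : 'I_n -> 'I_m) i : uniq (machine_seq sigma i).
Proof. by rewrite filter_uniq // enum_uniq. Qed.

Lemma mem_machine_seq (sigma : 'I_n -> 'I_m) i x :
  (x \in machine_seq sigma i) = (sigma x == i).
Proof. by rewrite mem_filter mem_enum andbT. Qed.

Definition jobs_upto (sigma : 'I_n -> 'I_m) i (jstar : 'I_n) : seq 'I_n :=
  [seq j : 'I_n <- machine_seq sigma i | j <= jstar].

Definition jobs_after (sigma : 'I_n -> 'I_m) i (jstar : 'I_n) : seq 'I_n :=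
  [seq j : 'I_n <- machine_seq sigma i | jstar < j].

Lemma sum_jobs_upto (sigma : 'I_n -> 'I_m) i jstar :
  \sum_(k <- jobs_upto sigma i jstar) p k = Pset p (Jmj sigma i jstar).
Proof.
rewrite /jobs_upto -filter_predI big_filter /Pset big_enum_cond.
by apply: eq_bigl => k; rewrite !inE /= andbC.
Qed.

Section Swap.
Variables (sigma : 'I_n -> 'I_m) (jstar : 'I_n) (h i : 'I_m) (H' I' : {set 'I_n}).
Hypotheses (neq_hi : h != i) (adm : admissible p sigma jstar h i).
Hypotheses (sub_H' : H' \subset JH p sigma jstar h)
  (sub_I' : I' \subset JI p sigma jstar i) (PH'_PI' : Pset p H' = Pset p I').

Local Notation upto k := (jobs_upto sigma k jstar).
Local Notation after k := (jobs_after sigma k jstar).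
Local Notation JHs := (JHseq p sigma jstar h).
Local Notation JIs := (JIseq p sigma jstar i).
Local Notation head_h := (take (size (upto h) - 2 * pmax p) (upto h)).
Local Notation sigma' := (intermediate p sigma jstar h i H' I').

Fact neq_ih : (i == h) = false.
Proof. by rewrite eq_sym (negbTE neq_hi). Qed.

Lemma sum_upto_h :
  \sum_(k <- upto h) p k = \sum_(k <- head_h) p k + \sum_(k <- JHs) p k.
Proof. by rewrite -big_cat cat_take_drop. Qed.

Lemma mem_jobs_upto k x : (x \in upto k) = (sigma x == k) && (x <= jstar).
Proof. by rewrite mem_filter mem_machine_seq andbC. Qed.

Lemma mem_jobs_after k x : (x \in after k) = (sigma x == k) && (jstar < x).
Proof. by rewrite mem_filter mem_machine_seq andbC. Qed.

Lemma mem_JH x : x \in JH p sigma jstar h ->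
  [/\ sigma x = h, x <= jstar & x \notin head_h].
Proof.
rewrite inE => xJH; have := mem_drop xJH.
rewrite mem_jobs_upto => /andP[/eqP -> ->].
split=> //; apply: contraL xJH; apply: notin_drop_of_take.
by rewrite filter_uniq ?machine_seq_uniq.
Qed.

Lemma mem_JI x : x \in JI p sigma jstar i ->
  [/\ sigma x = i, jstar < x & x \notin drop (2 * pmax p) (after i)].
Proof.
rewrite inE => xJI; have := mem_take xJI.
rewrite mem_jobs_after => /andP[/eqP -> ->].
by split=> //; apply: notin_drop_of_take xJI; rewrite filter_uniq ?machine_seq_uniq.
Qed.

Lemma completion_jstar : completion p sigma jstar = \sum_(k <- upto h) p k.
Proof.
case: adm; rewrite inE => /eqP sigma_jstar _ _.
by rewrite /completion sigma_jstar sum_jobs_upto.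
Qed.

Lemma sum_upto_gap :
  \sum_(k <- upto i) p k + 4 * pmax p ^ 2 <= \sum_(k <- upto h) p k.
Proof. by case: adm => _ _; rewrite /Delta -!sum_jobs_upto; lia. Qed.

Lemma sum_JHs_H' : \sum_(k <- [seq k <- JHs | k \in H']) p k = Pset p H'.
Proof.
apply: sum_filter_mem.
  by rewrite drop_uniq // filter_uniq // machine_seq_uniq.
by move=> x /(subsetP sub_H'); rewrite inE.
Qed.

Lemma sum_JIs_I' : \sum_(k <- [seq k <- JIs | k \in I']) p k = Pset p I'.
Proof.
apply: sum_filter_mem.
  by rewrite /JIseq take_uniq // filter_uniq // machine_seq_uniq.
by move=> x /(subsetP sub_I'); rewrite inE.
Qed.

Lemma ctime_swap_h j : j \in JH p sigma jstar h :|: JI p sigma jstar i ->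
  j \in sigma' h -> ctime_seq p (sigma' h) j <= completion p sigma jstar.
Proof.
rewrite /intermediate eqxx -/(jobs_upto _ _ _) -/(jobs_after _ _ _).
move=> jJ; have [j_head j_after] : j \notin head_h /\ j \notin after h.
  rewrite mem_jobs_after.
  case/setUP: jJ => [/mem_JH[-> le_j ->]|/mem_JI[sigma_j _ _]].
    by rewrite ltnNge le_j andbF.
  rewrite sigma_j neq_ih; split=> //; apply: contraFN neq_ih => /mem_take.
  by rewrite mem_jobs_upto sigma_j => /andP[].
rewrite !mem_cat (negbTE j_head) (negbTE j_after) orbF /=.
rewrite (catA _ _ (after h)) => j_mid.
apply: leq_trans (ctime_seq_cat_le _ j_head _) _; first by rewrite mem_cat.
rewrite completion_jstar sum_upto_h !big_cat /= leq_add2l.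
rewrite sum_JIs_I' -PH'_PI' -sum_JHs_H'.
by rewrite [X in _ <= X](sum_filter_split _ H') addnC.
Qed.

Lemma sum_JIs_le : \sum_(k <- JIs) p k <= 4 * pmax p ^ 2.
Proof.
apply: leq_trans (sum_le_size_pmax _) _.
have : size JIs <= 2 * pmax p by rewrite size_take_min geq_minl.
by move: (size JIs) (pmax p) => s P; nia.
Qed.

Lemma ctime_swap_i j : j \in JH p sigma jstar h :|: JI p sigma jstar i ->
  j \in sigma' i -> ctime_seq p (sigma' i) j <= completion p sigma jstar.
Proof.
rewrite /intermediate neq_ih eqxx -/(jobs_upto _ _ _) -/(jobs_after _ _ _).
move=> jJ.
have [j_upto j_tail] : j \notin upto i /\ j \notin drop (2 * pmax p) (after i).
  rewrite mem_jobs_upto; case/setUP: jJ => [/mem_JH[sigma_j _ _]|/mem_JI[-> lt_j ->]].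
    rewrite sigma_j (negbTE neq_hi); split=> //; apply: contraFN neq_ih => /mem_drop.
    by rewrite mem_jobs_after sigma_j eq_sym => /andP[].
  by rewrite leqNgt lt_j andbF.
rewrite !mem_cat (negbTE j_upto) (negbTE j_tail) orbF /=.
rewrite (catA _ _ (drop _ _)) => j_mid.
apply: leq_trans (ctime_seq_cat_le _ j_upto _) _; first by rewrite mem_cat.
rewrite completion_jstar !big_cat /= sum_JHs_H' PH'_PI' -sum_JIs_I'.
rewrite -sum_filter_split.
by apply: leq_trans sum_upto_gap; rewrite leq_add2l sum_JIs_le.
Qed.

Lemma swapped_machine j k : j \in JH p sigma jstar h :|: JI p sigma jstar i ->
  j \in sigma' k -> (k == h) || (k == i).
Proof.
rewrite /intermediate.
case: (eqVneq k h) => // neq_kh; case: (eqVneq k i) => // neq_ki.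
rewrite mem_machine_seq => jJ /eqP sigma_j; move: neq_kh neq_ki; rewrite -sigma_j.
by case/setUP: jJ => [/mem_JH[-> _ _]|/mem_JI[-> _ _]]; rewrite eqxx.
Qed.

End Swap.

End Schedules.

Theorem lemma6 (n m : nat) (p : 'I_n -> nat) (sigma : 'I_n -> 'I_m)
    (jstar : 'I_n) (h i : 'I_m) (H' I' : {set 'I_n}) :
  (forall j, 0 < p j) ->
  h != i ->
  admissible p sigma jstar h i ->
  H' \subset JH p sigma jstar h ->
  I' \subset JI p sigma jstar i ->
  H' != set0 -> I' != set0 ->
  Pset p H' = Pset p I' ->
  forall j, j \in JH p sigma jstar h :|: JI p sigma jstar i ->
    ctime p (intermediate p sigma jstar h i H' I') j <= completion p sigma jstar.
Proof.
move=> _ neq_hi adm sub_H' sub_I' _ _ PH'_PI' j jJ.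
rewrite /ctime; case: pickP => [k j_k|_] //.
have /orP[] := swapped_machine jJ j_k => /eqP k_eq; rewrite k_eq in j_k *.
- by apply: ctime_swap_h.
- by apply: ctime_swap_i.
Qed.
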